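(* Let $A=(i_1,\dots,i_a)$ be an ordered tuple of distinct elements of $I_d$, $\alpha\in\mathbb{Z}_2^{a,\mathrm{ev}}$, $r\ge0$, and put $\overrightarrow{A}=(i_a,i_1,\dots,i_{a-1})$, $\overrightarrow{\alpha}=(\alpha_a,\alpha_1,\dots,\alpha_{a-1})$. Then in $\mathcal{G}$, $$\overrightarrow{A}^{(r,\overrightarrow{\alpha})}=(-1)^{\alpha_a((a-1)(l-1)+r+1)}A^{(r,\alpha)}.$$
   Context: Fix a commutative ring $R$ and integers $l,d\ge1$; $I_a=\{1,\dots,a\}$. Let $\mathcal{G}$ be the $R$-superalgebra that is free as an $R$-module with basis $\{x_1^{m_1}\cdots x_d^{m_d}\,w\,c_1^{e_1}\cdots c_d^{e_d}: 0\le m_i\le l-1,\ w\in\Sigma_d,\ e_i\in\{0,1\}\}$, with multiplication determined by: the $x_i$ commute and $x_i^l=0$; $w\in\Sigma_d$ multiply as in the symmetric group (composition right to left); $c_i^2=1$, $c_ic_j=-c_jc_i$ for $i\ne j$; $wx_i=x_{w(i)}w$, $wc_i=c_{w(i)}w$; $x_ic_i=-c_ix_i$, $x_ic_j=c_jx_i$ for $i\ne j$. For an ordered tuple $A=(i_1,\dots,i_a)$ of distinct elements of $I_d$, $\sigma_A$ is the cycle $i_1\mapsto i_2\mapsto\dots\mapsto i_a\mapsto i_1$. For $\alpha\in\mathbb{Z}_2^a$: $|\alpha|=\sum_j\alpha_j$; $\mathbb{Z}_2^{a,\mathrm{ev}}$ is the set of $\alpha$ with $|\alpha|$ even; $c_\alpha(A)=c_{i_1}^{\alpha_1}\cdots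 c_{i_a}^{\alpha_a}$; $\epsilon^\alpha_j=\prod_{k<j}(-1)^{\alpha_k}$. For $r\ge0$, $\alpha\in\mathbb{Z}_2^{a,\mathrm{ev}}$: $h^\alpha_r(A)=\sum_{r_1+\dots+r_a=(a-1)(l-1)+r,\ r_j\ge0}\prod_j(\epsilon^\alpha_jx_{i_j})^{r_j}$ and $A^{(r,\alpha)}=h^\alpha_r(A)\sigma_Ac_\alpha(A)$. *)

From HB Require Import structures.
From mathcomp Require Import all_boot all_order all_algebra fingroup perm.
From mathcomp Require Import zify.
Set Implicit Arguments. Unset Strict Implicit. Unset Printing Implicit Defensive.
Import GRing.Theory.
Local Open Scope ring_scope.

(* Indices: I_d is represented by 'I_d (0-based); an ordered tuple
   A = (i_1,...,i_a) of distinct elements is an injective map 'I_a -> 'I_d. *)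

Section Cycle.
Variables (d a : nat) (A : 'I_a -> 'I_d).

Definition cycle_fun (i : 'I_d) : 'I_d :=
  if [pick j | A j == i] is Some j then A (ordS j) else i.

Lemma cycle_fun_inj : injective A -> injective cycle_fun.
Proof.
move=> Ainj i1 i2; rewrite /cycle_fun.
case: pickP => [j1 /eqP Hj1|H1]; case: pickP => [j2 /eqP Hj2|H2].
- move/Ainj/ordS_inj => E'.
  by rewrite -Hj1 -Hj2 E'.
- move=> E; have := H2 (ordS j1); by rewrite -E eqxx.
- move=> E; have := H1 (ordS j2); by rewrite E eqxx.
- by [].
Qed.

End Cycle.

Section Algebra.
Variables (R : comPzRingType) (G : algType R) (d l : nat)
  (x : 'I_d -> G) (c : 'I_d -> G) (sg : {perm 'I_d} -> G).

(* The defining relations of the superalgebra G.  The symmetric group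
   multiplies with composition right to left: (w w')(i) = w (w' i); in
   mathcomp, (w' * w)%g i = w (w' i). *)
Definition G_relations : Prop :=
  (forall i j, x i * x j = x j * x i) /\
      (forall i, x i ^+ l = 0) /\
      sg 1%g = 1 /\ (forall w w', sg w * sg w' = sg (w' * w)%g) /\
      (forall i, c i * c i = 1) /\
      (forall i j, i != j -> c i * c j = - (c j * c i)) /\
      (forall w i, sg w * x i = x (w i) * sg w) /\
      (forall w i, sg w * c i = c (w i) * sg w) /\
      (forall i j, x i * c j = if i == j then - (c j * x i) else c j * x i).

Definition basis_index := ({ffun 'I_d -> 'I_l} * {perm 'I_d} * {ffun 'I_d -> bool})%type.

Definition monomial (b : basis_index) : G :=
  let: (m, w, e) := b in
  (\prod_(i < d) x i ^+ m i) * sg w * (\prod_(i < d) c i ^+ e i).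

Definition monomial_basis : Prop :=
  forall g : G, exists! coef : {ffun basis_index -> R},
    g = \sum_(b : basis_index) coef b *: monomial b.

Definition sigmaA a (A : 'I_a -> 'I_d) (HA : injective A) : {perm 'I_d} :=
  perm (cycle_fun_inj HA).

Definition c_alpha a (A : 'I_a -> 'I_d) (alpha : 'I_a -> bool) : G :=
  \prod_(j < a) c (A j) ^+ alpha j.

Definition eps_alpha a (alpha : 'I_a -> bool) (j : 'I_a) : G :=
  \prod_(k < a | (k < j)%N) (-1) ^+ alpha k.

Definition h_alpha a (A : 'I_a -> 'I_d) (alpha : 'I_a -> bool) (r : nat) : G :=
  let N := ((a.-1) * (l.-1) + r)%N in
  \sum_(rr : {ffun 'I_a -> 'I_N.+1} | (\sum_(j < a) rr j)%N == N)
     \prod_(j < a) (eps_alpha alpha j * x (A j)) ^+ rr j.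

Definition A_r_alpha a (A : 'I_a -> 'I_d) (HA : injective A)
  (alpha : 'I_a -> bool) (r : nat) : G :=
  h_alpha A alpha r * sg (sigmaA HA) * c_alpha A alpha.

End Algebra.

Definition rot_right T a (f : 'I_a -> T) : 'I_a -> T := fun j => f (ord_pred j).

Lemma rot_right_inj T a (f : 'I_a -> T) : injective f -> injective (rot_right f).
Proof.
by move=> finj j1 j2 /finj/ord_pred_inj.
Qed.

From HB Require Import structures.
From mathcomp Require Import all_boot all_order all_algebra fingroup perm.
Set Implicit Arguments. Unset Strict Implicit. Unset Printing Implicit Defensive.
Import GRing.Theory.
Local Open Scope ring_scope.

(* Rotating the tuple does not change the cycle sigma_A.  In c_alpha(A) the
   factor c_{i_a}^{alpha_a} moves from the end to the front, past factors c_i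
   with i <> i_a and total exponent |alpha| - alpha_a; as |alpha| is even this
   costs (-1)^{alpha_a}.  In h^alpha_r(A), rotating alpha shifts the parity of
   every epsilon^alpha_j by alpha_a (again because |alpha| is even), so each
   monomial of degree (a-1)(l-1)+r picks up (-1)^{alpha_a ((a-1)(l-1)+r)}. *)

Lemma ordS_max n : ordS (ord_max : 'I_n.+1) = ord0.
Proof. by apply: val_inj; rewrite /= modnn. Qed.

Lemma ordS_widen n (i : 'I_n) : ordS (widen_ord (leqnSn n) i) = lift ord0 i.
Proof. by apply: val_inj; rewrite /= modn_small // ltnS. Qed.

Lemma ord_pred0 n : ord_pred (ord0 : 'I_n.+1) = ord_max.
Proof. by rewrite -(ordS_max n) ordSK. Qed.

Lemma ord_pred_lift n (i : 'I_n) : ord_pred (lift ord0 i) = widen_ord (leqnSn n) i.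
Proof. by rewrite -ordS_widen ordSK. Qed.

Lemma odd_prefix_sum_rot_right n (alpha : 'I_n.+1 -> bool) (k : 'I_n.+1) :
  ~~ odd (\sum_(j < n.+1) alpha j) ->
  odd (\sum_(m < n.+1 | (m < ordS k)%N) rot_right alpha m)
  = alpha ord_max (+) odd (\sum_(m < n.+1 | (m < k)%N) alpha m).
Proof.
rewrite big_ord_recr oddD oddb => Hev.
have [->|Hk] := eqVneq k ord_max.
  rewrite ordS_max big_pred0 //= big_mkcond big_ord_recr /= ltnn addn0.
  under eq_bigr => i _ do rewrite ltn_ord.
  by move: Hev; case: odd; case: (alpha ord_max).
have kn : (k < n)%N.
  by rewrite -ltnS ltn_neqAle ltn_ord andbT -(inj_eq val_inj) in Hk *.
have -> : k = widen_ord (leqnSn n) (Ordinal kn) by apply: val_inj.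
rewrite ordS_widen big_mkcond big_ord_recl /= /rot_right ord_pred0.
rewrite [in RHS]big_mkcond big_ord_recr /= ltnNge (ltnW kn) addn0 oddD oddb.
congr (_ (+) odd _); apply: eq_bigr => i _.
by rewrite /bump /= !add1n ltnS ord_pred_lift.
Qed.

Lemma prod_ordS (R : pzSemiRingType) n (F : 'I_n.+1 -> R) :
  (forall i j, GRing.comm (F i) (F j)) ->
  \prod_(j < n.+1) F (ordS j) = \prod_(j < n.+1) F j.
Proof.
move=> Fcomm; rewrite big_ord_recr big_ord_recl /= ordS_max.
under eq_bigr do rewrite ordS_widen.
by apply/esym/commr_prod => i _; apply: Fcomm.
Qed.

Lemma prod_signM_expr (R : pzRingType) (I : Type) (s : seq I) (e : nat)
    (n : I -> nat) (z : I -> R) :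
  \prod_(i <- s) ((-1) ^+ e * z i) ^+ n i
  = (-1) ^+ (e * \sum_(i <- s) n i) * \prod_(i <- s) z i ^+ n i.
Proof.
elim: s => [|i s IH]; first by rewrite !big_nil muln0 mulr1.
rewrite !big_cons IH exprMn_comm; last exact/esym/commr_sign.
rewrite mulnDr exprD -exprM -!mulrA; congr (_ * _).
by rewrite !mulrA (commr_sign (z i ^+ n i)).
Qed.

Section EpsAlpha.
Variables (R : comPzRingType) (G : algType R).

Lemma eps_alphaE n (alpha : 'I_n -> bool) (j : 'I_n) :
  eps_alpha G alpha j = (-1) ^+ (\sum_(k < n | (k < j)%N) alpha k).
Proof. exact: prodrXr. Qed.

Lemma eps_alpha_rot_right n (alpha : 'I_n.+1 -> bool) (k : 'I_n.+1) :
  ~~ odd (\sum_(j < n.+1) alpha j) ->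
  eps_alpha G (rot_right alpha) (ordS k)
  = (-1) ^+ alpha ord_max * eps_alpha G alpha k.
Proof.
move=> Hev; rewrite !eps_alphaE -exprD -signr_odd -[RHS]signr_odd.
by rewrite odd_prefix_sum_rot_right // oddD oddb.
Qed.

End EpsAlpha.

Section GeneratorsX.
Variables (R : comPzRingType) (G : algType R) (d l : nat) (x : 'I_d -> G).
Hypothesis x_comm : forall i j, x i * x j = x j * x i.

Lemma comm_signed_x (s t m k : nat) (i j : 'I_d) :
  GRing.comm (((-1) ^+ s * x i) ^+ m) (((-1) ^+ t * x j) ^+ k).
Proof.
apply/commrX/esym/commrX/commrM; first exact: commr_sign.
apply/esym/commrM; [exact: commr_sign | exact: x_comm].
Qed.

Lemma h_term_rot_right n (A : 'I_n.+1 -> 'I_d) (alpha : 'I_n.+1 -> bool)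
    (rr : 'I_n.+1 -> nat) :
  ~~ odd (\sum_(j < n.+1) alpha j) ->
  \prod_(j < n.+1)
     (eps_alpha G (rot_right alpha) j * x (rot_right A j)) ^+ rr (ord_pred j)
  = (-1) ^+ (alpha ord_max * \sum_(j < n.+1) rr j)
      * \prod_(j < n.+1) (eps_alpha G alpha j * x (A j)) ^+ rr j.
Proof.
move=> Hev; rewrite -prod_ordS => [|i j]; last first.
  by rewrite !eps_alphaE; apply: comm_signed_x.
under eq_bigr => j _ do
  rewrite /rot_right ordSK eps_alpha_rot_right // -mulrA.
by rewrite prod_signM_expr.
Qed.

Lemma h_alpha_rot_right n (A : 'I_n.+1 -> 'I_d) (alpha : 'I_n.+1 -> bool)
    (r : nat) :
  ~~ odd (\sum_(j < n.+1) alpha j) ->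
  h_alpha l x (rot_right A) (rot_right alpha) r
  = (-1) ^+ (alpha ord_max * ((n.+1).-1 * l.-1 + r)) * h_alpha l x A alpha r.
Proof.
move=> Hev; rewrite /h_alpha; set N := ((n.+1).-1 * l.-1 + r)%N.
pose rot_ffun (rr : {ffun 'I_n.+1 -> 'I_N.+1}) := [ffun j => rr (ord_pred j)].
have rot_ffun_inj : injective rot_ffun.
  move=> r1 r2 /ffunP E; apply/ffunP => k.
  by have := E (ordS k); rewrite !ffunE ordSK.
have sum_rot_ffun rr :
    (\sum_(j < n.+1) rot_ffun rr j = \sum_(j < n.+1) rr j)%N.
  rewrite [RHS](reindex_inj (@ord_pred_inj n.+1)).
  by apply: eq_bigr => j _; rewrite ffunE.
rewrite (reindex_inj rot_ffun_inj) mulr_sumr; apply: eq_big => rr.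
  by rewrite sum_rot_ffun.
rewrite sum_rot_ffun => /eqP sum_rr.
under eq_bigr => j _ do rewrite ffunE.
by rewrite (h_term_rot_right A (fun j => rr j) Hev) sum_rr.
Qed.

End GeneratorsX.

Section GeneratorsC.
Variables (R : comPzRingType) (G : algType R) (d : nat) (c : 'I_d -> G).
Hypothesis c_anticomm : forall i j, i != j -> c i * c j = - (c j * c i).

Lemma c_mul_prod_anticomm (I : Type) (s : seq I) (F : I -> 'I_d) (e : I -> bool)
    (k : 'I_d) :
  (forall i, F i != k) ->
  c k * \prod_(i <- s) c (F i) ^+ e i
  = (-1) ^+ (\sum_(i <- s) e i) * (\prod_(i <- s) c (F i) ^+ e i) * c k.
Proof.
move=> Fk; elim: s => [|i s IH]; first by rewrite !big_nil mulr1 !mul1r.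
have c_swap : c k * c (F i) ^+ e i = (-1) ^+ e i * c (F i) ^+ e i * c k.
  case: (e i); last by rewrite mulr1 !mul1r.
  by rewrite !expr1 mulN1r mulNr c_anticomm // eq_sym.
rewrite !big_cons mulrA c_swap -!mulrA IH exprD !mulrA; congr (_ * _ * _).
by rewrite -!mulrA (commr_sign (c (F i) ^+ e i)).
Qed.

Lemma c_alpha_rot_right n (A : 'I_n.+1 -> 'I_d) (alpha : 'I_n.+1 -> bool) :
  injective A -> ~~ odd (\sum_(j < n.+1) alpha j) ->
  c_alpha c (rot_right A) (rot_right alpha)
  = (-1) ^+ alpha ord_max * c_alpha c A alpha.
Proof.
move=> A_inj Hev; rewrite /c_alpha /rot_right.
rewrite big_ord_recl [in RHS]big_ord_recr /= ord_pred0.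
under eq_bigr do rewrite ord_pred_lift.
case alpha_max: (alpha ord_max) => /=; last by rewrite mulr1 !mul1r.
rewrite expr1 c_mul_prod_anticomm => [|i]; last first.
  by rewrite (inj_eq A_inj) -(inj_eq val_inj) /= neq_ltn ltn_ord.
rewrite -signr_odd; move: Hev; rewrite big_ord_recr alpha_max /= addn1 /=.
by rewrite negbK => ->; rewrite mulrA.
Qed.

End GeneratorsC.

Lemma sigmaA_rot_right d n (A : 'I_n -> 'I_d) (A_inj : injective A) :
  sigmaA (rot_right_inj A_inj) = sigmaA A_inj.
Proof.
apply/permP => i; rewrite !permE /cycle_fun /rot_right.
case: pickP => [j /eqP Aj | notA]; case: pickP => [k /eqP Ak | notA'].
- by rewrite ordSK -(A_inj _ _ (etrans Aj (esym Ak))) ord_predK.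
- by have := notA' (ord_pred j); rewrite Aj eqxx.
- by have := notA (ordS k); rewrite ordSK Ak eqxx.
- by [].
Qed.

Theorem mainTheorem12 (R : comPzRingType) (G : algType R) (d l : nat)
    (x c : 'I_d -> G) (sg : {perm 'I_d} -> G)
    (Hd : (0 < d)%N) (Hl : (0 < l)%N)
    (Hrel : G_relations l x c sg) (Hbasis : monomial_basis l x c sg)
    (a : nat) (A : 'I_a.+1 -> 'I_d) (HA : injective A)
    (alpha : 'I_a.+1 -> bool) (Hev : ~~ odd (\sum_(j < a.+1) alpha j))
    (r : nat) :
  A_r_alpha l x c sg (rot_right_inj HA) (rot_right alpha) r
  = (-1) ^+ (alpha ord_max * ((a.+1).-1 * l.-1 + r + 1))
      * A_r_alpha l x c sg HA alpha r.
Proof.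
have [x_comm [_ [_ [_ [_ [c_anticomm _]]]]]] := Hrel.
rewrite /A_r_alpha sigmaA_rot_right (c_alpha_rot_right c_anticomm HA Hev).
rewrite (h_alpha_rot_right l x_comm A r Hev).
rewrite [in RHS]mulnDr muln1 exprD -!mulrA; congr (_ * _).
rewrite (mulrA (sg _)) (commr_sign (sg _)) -mulrA mulrA.
by rewrite (commr_sign (h_alpha _ _ _ _ _)) -!mulrA.
Qed.
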